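(* Let $n\in\mathbb N$ and let $T:\mathbb C_n[z]\to\mathbb C[z]$ be a linear operator. Then $T$ preserves stability (i.e. $T(f)\in\mathcal H_1(\mathbb C)\cup\{0\}$ for every $f\in\mathcal H_1(\mathbb C)\cap\mathbb C_n[z]$) if and only if either (a) $T$ has range of dimension at most one and $T(f)=\alpha(f)P$ for $f\in\mathbb C_n[z]$, where $\alpha:\mathbb C_n[z]\to\mathbb C$ is a linear functional and $P\in\mathcal H_1(\mathbb C)$; or (b) $T[(z+w)^n]\in\mathcal H_2(\mathbb C)$.
   Context: $\mathbb C_n[z]$ is the space of complex polynomials of degree at most $n$. A polynomial $f\in\mathbb C[z_1,\dots,z_k]$ is stable if it is non-zero and $f(z_1,\dots,z_k)\neq0$ whenever $\Im z_j>0$ for all $j$; $\mathcal H_k(\mathbb C)$ denotes the set of stable polynomials in $k$ variables. $T$ is extended to polynomials in $z,w$ by $T(z^kw^\ell)=T(z^k)w^\ell$. *)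

From HB Require Import structures.
From mathcomp Require Import all_boot all_order all_algebra.
From mathcomp Require Import complex.
From mathcomp Require Import reals.
Set Implicit Arguments. Unset Strict Implicit. Unset Printing Implicit Defensive.
Import Order.TTheory GRing.Theory Num.Theory.
Local Open Scope ring_scope.

(* The complex numbers are modelled as R[i] for an arbitrary realType R
   (every realType is isomorphic to the real numbers). *)

Definition in_Cn (R : realType) (n : nat) (f : {poly R[i]}) : Prop :=
  (size f <= n.+1)%N.

Definition stable1 (R : realType) (f : {poly R[i]}) : Prop :=
  f != 0 /\ forall z : R[i], 0 < complex.Im z -> f.[z] != 0.

(* Bivariate polynomials in z, w are represented as {poly {poly R[i]}}:
   the outer variable is w, the coefficients are polynomials in z.
   Evaluation at (z, w) is (Q.[w%:P]).[z]. *)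
Definition stable2 (R : realType) (Q : {poly {poly R[i]}}) : Prop :=
  Q != 0 /\ forall z w : R[i], 0 < complex.Im z -> 0 < complex.Im w ->
    (Q.[w%:P]).[z] != 0.

(* T : C_n[z] -> C[z] linear: modelled as a function on {poly R[i]}
   which is linear on C_n[z]; its values outside C_n[z] are irrelevant. *)
Definition linear_on_Cn (R : realType) (n : nat) (V : lmodType R[i])
    (T : {poly R[i]} -> V) : Prop :=
  forall (a : R[i]) (f g : {poly R[i]}), in_Cn n f -> in_Cn n g ->
    T (a *: f + g) = a *: T f + T g.

(* Extension of T to polynomials in z, w: T(z^k w^l) = T(z^k) w^l,
   i.e. T acts on the z-coefficients of each power of w. *)
Definition Text (R : realType) (T : {poly R[i]} -> {poly R[i]})
    (Q : {poly {poly R[i]}}) : {poly {poly R[i]}} := map_poly T Q.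

(* (z + w)^n as an element of {poly {poly R[i]}} (outer 'X = w, inner 'X = z). *)
Definition zw_pow (R : realType) (n : nat) : {poly {poly R[i]}} :=
  ('X + ('X : {poly R[i]})%:P) ^+ n.

Definition preserves_stability (R : realType) (n : nat)
    (T : {poly R[i]} -> {poly R[i]}) : Prop :=
  forall f : {poly R[i]}, in_Cn n f -> stable1 f -> stable1 (T f) \/ T f = 0.

(* If [T ((z + w)^n)] never vanishes for [Im w > 0], the symbol
   [Q (z, w) = T ((z + w)^n)] is stable because [(z + w)^n] is stable in [z].
   Otherwise [T ((z + w0)^n) = 0] for some [w0] in the upper half-plane; as
   [(z + w0)^n] dominates every [f] of [C_n[z]] there, [(z + w0)^n + e f] is stable for
   small [e > 0], so every [T f] is stable or zero, which forces rank at most one.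
   Conversely, [T f (z)] is the apolar pairing of [f] with [w |-> Q (z, w)].  When [f]
   has [n] roots, all in the open lower half-plane, this pairing does not vanish by
   Grace's theorem, proved by splitting off one root at a time with Laguerre's theorem
   on polar derivatives.  Real roots and roots lost to a drop in degree are limits of
   such roots, handled by Hurwitz's theorem for linear pencils. *)

From HB Require Import structures.
From mathcomp Require Import all_boot all_order all_algebra.
From mathcomp Require Import complex reals.
From mathcomp Require Import ring lra zify.
From Stdlib Require Import Classical.
Set Implicit Arguments. Unset Strict Implicit. Unset Printing Implicit Defensive.
Import Order.TTheory GRing.Theory Num.Theory.
Import ComplexField Normc.
Local Open Scope ring_scope.

Section ComplexFacts.
Variable R : rcfType.
Local Notation C := R[i].
Local Notation Re := (@complex.Re R).
Local Notation Im := (@complex.Im R).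

Lemma ReM (x y : C) : Re (x * y) = Re x * Re y - Im x * Im y.
Proof. by case: x; case: y. Qed.

Lemma ImM (x y : C) : Im (x * y) = Re x * Im y + Im x * Re y.
Proof. by case: x => a b; case: y => c d /=. Qed.

Lemma Im_i_gt0 : 0 < Im 'i%C.
Proof. exact: ltr01. Qed.

Lemma Im_gt0_neq0 (x : C) : 0 < Im x -> x != 0.
Proof. by apply: contraTneq => ->; rewrite ltxx. Qed.

Lemma normc_ge0 (x : C) : 0 <= normc x.
Proof. by case: x => a b /=; rewrite sqrtr_ge0. Qed.

Lemma Im_le_normc (x : C) : Im x <= normc x.
Proof.
case: x => a b /=; apply: le_trans (ler_norm b) _.
by rewrite -sqrtr_sqr; apply: ler_wsqrtr; rewrite lerDr sqr_ge0.
Qed.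

Lemma normcX (x : C) k : normc (x ^+ k) = normc x ^+ k.
Proof.
elim: k => [|k IH]; first by rewrite !expr0 normc1.
by rewrite !exprS normcM IH.
Qed.

Lemma lerB_normcD (x y : C) : normc x - normc y <= normc (x + y).
Proof. by have := le_normcD (x + y) (- y); rewrite addrK normcN lerBlDr. Qed.

Lemma normc_real (a : R) : normc (a%:C)%C = `|a|.
Proof. by rewrite /normc /= expr0n /= addr0 sqrtr_sqr. Qed.

Lemma normc_sum (I : Type) (r : seq I) (P : pred I) (F : I -> C) :
  normc (\sum_(i <- r | P i) F i) <= \sum_(i <- r | P i) normc (F i).
Proof.
elim/big_rec2: _ => [|i y x _ hx]; first by rewrite normc0.
by apply: (le_trans (le_normcD _ _)); rewrite lerD2l.
Qed.

Lemma root_prod_XsubC_mem (rs : seq C) r : r \in rs ->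
  (\prod_(x <- rs) ('X - x%:P)).[r] = 0.
Proof.
move=> hr; rewrite horner_prod; apply/eqP; rewrite prodf_seq_eq0.
by apply/hasP; exists r => //; rewrite hornerXsubC subrr eqxx.
Qed.

Lemma roots_Im_le0 (p : {poly C}) (rs : seq C) :
  p = lead_coef p *: \prod_(r <- rs) ('X - r%:P) ->
  (forall w, 0 < Im w -> p.[w] != 0) -> all (fun r => Im r <= 0) rs.
Proof.
move=> Hp pv; apply/allP => r hr; rewrite leNgt; apply/negP => hr'.
by have := pv r hr'; rewrite Hp hornerZ root_prod_XsubC_mem // mulr0 eqxx.
Qed.

End ComplexFacts.

Lemma stable1P (R : realType) (p : {poly R[i]}) :
  (forall z : R[i], 0 < complex.Im z -> p.[z] != 0) -> stable1 p.
Proof.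
move=> h; split => //; apply/eqP => p0.
by have := h _ (Im_i_gt0 R); rewrite p0 horner0 eqxx.
Qed.

Lemma stable1Z (R : realType) (c : R[i]) (p : {poly R[i]}) :
  c != 0 -> (forall z, 0 < complex.Im z -> p.[z] != 0) -> stable1 (c *: p).
Proof. by move=> c0 hp; apply: stable1P => z hz; rewrite hornerZ mulf_neq0 ?hp. Qed.

Lemma coef_XaddC_exp (S : comNzRingType) (c : S) n k :
  (('X + c%:P) ^+ n)`_k = c ^+ (n - k) *+ 'C(n, k).
Proof.
rewrite addrC exprDn coef_sum.
have coefk (i : 'I_n.+1) : (c%:P ^+ (n - i) * 'X^i *+ 'C(n, i))`_k =
    (c ^+ (n - i) *+ 'C(n, i)) * (k == i)%:R.
  by rewrite coefMn -polyC_exp coefCM coefXn mulrnAl.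
under eq_bigr do rewrite coefk.
case: (ltnP n k) => hk.
  rewrite bin_small // mulr0n big1 // => i _.
  by rewrite gtn_eqF ?mulr0 // (leq_trans (ltn_ord i)).
rewrite (bigD1 (Ordinal (hk : (k < n.+1)%N))) //= eqxx mulr1 big1 ?addr0 //.
by move=> i /eqP ne; rewrite (_ : (k == i) = false) ?mulr0 //; apply/eqP => e; apply: ne; apply: val_inj.
Qed.

Section CnSubspace.
Variables (R : realType) (n : nat).
Local Notation C := R[i].

Lemma in_Cn0 : in_Cn n (0 : {poly C}).
Proof. by rewrite /in_Cn size_poly0. Qed.

Lemma in_CnD (f g : {poly C}) : in_Cn n f -> in_Cn n g -> in_Cn n (f + g).
Proof. by move=> hf hg; apply: leq_trans (size_polyD _ _) _; rewrite geq_max hf hg. Qed.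

Lemma in_CnZ (a : C) (f : {poly C}) : in_Cn n f -> in_Cn n (a *: f).
Proof. exact/leq_trans/size_scale_leq. Qed.

Lemma in_CnXn k : (k <= n)%N -> in_Cn n ('X^k : {poly C}).
Proof. by rewrite /in_Cn size_polyXn. Qed.

Lemma in_Cn_sum (I : Type) (r : seq I) (P : pred I) (F : I -> {poly C}) :
  (forall i, P i -> in_Cn n (F i)) -> in_Cn n (\sum_(i <- r | P i) F i).
Proof.
move=> hF; elim/big_rec: _ => [|i x Pi hx]; first exact: in_Cn0.
exact: in_CnD (hF i Pi) hx.
Qed.

Lemma in_Cn_XaddC_exp (w : C) : in_Cn n (('X + w%:P) ^+ n).
Proof. by apply: leq_trans (size_poly_exp_leq _ _) _; rewrite size_XaddC mul1n. Qed.

Lemma in_Cn_prod_XsubC (rs : seq C) :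
  (size rs <= n)%N -> in_Cn n (\prod_(r <- rs) ('X - r%:P)).
Proof. by rewrite /in_Cn size_prod_XsubC ltnS. Qed.

Lemma in_Cn_expand (h : {poly C}) : in_Cn n h ->
  h = \sum_(j < n.+1) h`_j *: 'X^j.
Proof.
move=> hh; rewrite -poly_def; apply/polyP => j; rewrite coef_poly.
by case: ltnP => // hj; move/leq_sizeP: hh => ->.
Qed.

Section LinearMap.
Variables (V : lmodType C) (T : {poly C} -> V).
Hypothesis HT : linear_on_Cn n T.

Lemma linear_Cn0 : T 0 = 0.
Proof.
have := HT 1 in_Cn0 in_Cn0; rewrite !scale1r addr0 => e.
by have := congr1 (fun x => x - T 0) e; rewrite subrr addrK => <-.
Qed.

Lemma linear_CnD f g : in_Cn n f -> in_Cn n g -> T (f + g) = T f + T g.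
Proof. by move=> hf hg; have := HT 1 hf hg; rewrite !scale1r. Qed.

Lemma linear_CnZ a f : in_Cn n f -> T (a *: f) = a *: T f.
Proof. by move=> hf; have := HT a hf in_Cn0; rewrite !addr0 linear_Cn0 addr0. Qed.

Lemma linear_Cn_sum (I : Type) (r : seq I) (P : pred I) (F : I -> {poly C}) :
  (forall i, P i -> in_Cn n (F i)) ->
  T (\sum_(i <- r | P i) F i) = \sum_(i <- r | P i) T (F i).
Proof.
move=> hF; elim: r => [|i r IH]; first by rewrite !big_nil linear_Cn0.
rewrite !big_cons; case: ifP => // Pi.
by rewrite linear_CnD ?IH ?hF //; [exact: hF | exact: in_Cn_sum].
Qed.

End LinearMap.

Lemma horner_linear_Cn (T : {poly C} -> {poly C}) (h : {poly C}) (z : C) :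
  linear_on_Cn n T -> in_Cn n h ->
  (T h).[z] = \sum_(j < n.+1) h`_j * (T 'X^j).[z].
Proof.
move=> HT hh; have hX (j : 'I_n.+1) : in_Cn n ('X^j : {poly C}) by apply: in_CnXn; rewrite -ltnS.
rewrite {1}(in_Cn_expand hh) (linear_Cn_sum HT) => [|j _]; last exact: in_CnZ.
by rewrite horner_sum; apply: eq_bigr => j _; rewrite (linear_CnZ HT) ?hornerZ.
Qed.

End CnSubspace.

Definition apolar (F : fieldType) (n : nat) (f g : {poly F}) : F :=
  \sum_(k < n.+1) f`_(n - k) * g`_k / ('C(n, k))%:R.

Lemma bin_natr_neq0 (F : numFieldType) n k : (k <= n)%N -> ('C(n, k))%:R != 0 :> F.
Proof. by move=> h; rewrite pnatr_eq0 -lt0n bin_gt0. Qed.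

Section Symbol.
Variables (R : realType) (n : nat) (T : {poly R[i]} -> {poly R[i]}).
Hypothesis HT : linear_on_Cn n T.
Local Notation C := R[i].
Local Notation Q := (Text T (zw_pow R n)).

Definition symbol_at (z : C) : {poly C} :=
  \poly_(k < n.+1) ('C(n, k)%:R * (T 'X^(n - k)).[z]).

Lemma coef_symbol k : Q`_k = ('C(n, k))%:R *: T 'X^(n - k).
Proof.
rewrite /Text coef_map_id0 ?(linear_Cn0 HT) // coef_XaddC_exp -scaler_nat.
by rewrite (linear_CnZ HT) //; apply: in_CnXn; rewrite leq_subr.
Qed.

Lemma size_symbol : (size Q <= n.+1)%N.
Proof.
apply: leq_trans (size_poly _ _) _; apply: leq_trans (size_poly_exp_leq _ _) _.
by rewrite size_XaddC mul1n.
Qed.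

Lemma horner_symbol (z w : C) :
  (Q.[w%:P]).[z] = \sum_(k < n.+1) ('C(n, k)%:R * w ^+ k) * (T 'X^(n - k)).[z].
Proof.
rewrite (horner_coef_wide _ size_symbol) horner_sum; apply: eq_bigr => k _.
rewrite -polyC_exp hornerM hornerC coef_symbol hornerZ; ring.
Qed.

Lemma horner_symbol_at z w : (symbol_at z).[w] = (Q.[w%:P]).[z].
Proof. by rewrite horner_symbol horner_poly; apply: eq_bigr => k _; ring. Qed.

Lemma horner_symbol_T (z w : C) : (Q.[w%:P]).[z] = (T (('X + w%:P) ^+ n)).[z].
Proof.
rewrite horner_symbol (horner_linear_Cn _ HT (in_Cn_XaddC_exp _ _)).
rewrite (reindex_inj rev_ord_inj) /=; apply: eq_bigr => k _.
have hk : (k <= n)%N by rewrite -ltnS.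
by rewrite subSS coef_XaddC_exp subKn // bin_sub // mulr_natl.
Qed.

Lemma horner_T_apolar (h : {poly C}) z : in_Cn n h -> (T h).[z] = apolar n h (symbol_at z).
Proof.
move=> hh; rewrite (horner_linear_Cn _ HT hh) /apolar (reindex_inj rev_ord_inj) /=.
apply: eq_bigr => k _; rewrite /symbol_at coef_poly ltn_ord subSS.
have hc : ('C(n, k))%:R != 0 :> C by apply: bin_natr_neq0; rewrite -ltnS.
by rewrite [_ * (_ * _)]mulrCA -mulrA mulrCA divff // mulr1.
Qed.

End Symbol.

Section Perturbation.
Variable R : rcfType.
Local Notation C := R[i].
Local Notation Im := (@complex.Im R).
Variables (n : nat) (w0 : C).
Hypothesis w0_gt0 : 0 < Im w0.

Lemma normc_XaddC_ge (z : C) : 0 < Im z -> Im w0 <= normc (z + w0).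
Proof. by move=> hz; apply: le_trans (Im_le_normc _); rewrite raddfD lerDr ltW. Qed.

(* Expanding [g] in powers of [z + w0], each term is bounded on the upper half-plane
   because [normc (z + w0) >= Im w0 > 0]. *)
Lemma poly_growth_le (g : {poly C}) : (size g <= n.+1)%N ->
  exists2 M : R, 0 <= M &
    forall z, 0 < Im z -> normc g.[z] <= M * normc (z + w0) ^+ n.
Proof.
move=> sg; set d := Im w0.
pose gt := g \Po ('X - w0%:P).
have sgt : (size gt <= n.+1)%N.
  apply: leq_trans (size_comp_poly_leq _ _) _; rewrite size_XsubC muln1 ltnS.
  by rewrite -subn1 leq_subLR add1n.
exists (\sum_(k < n.+1) normc gt`_k / d ^+ (n - k)).
  by apply: sumr_ge0 => k _; rewrite divr_ge0 ?normc_ge0 // exprn_ge0 // ltW.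
move=> z hz; have hy := normc_XaddC_ge hz; set y := z + w0 in hy *.
have y0 : 0 < normc y by apply: lt_le_trans hy.
have -> : g.[z] = gt.[y] by rewrite horner_comp hornerD hornerN hornerX hornerC addrK.
rewrite (horner_coef_wide _ sgt) mulr_suml; apply: le_trans (normc_sum _ _ _) _.
apply: ler_sum => k _; rewrite normcM normcX -mulrA; apply: ler_wpM2l; first exact: normc_ge0.
have hk : (k <= n)%N by rewrite -ltnS.
have -> : normc y ^+ n = normc y ^+ k * normc y ^+ (n - k) by rewrite -exprD subnKC.
rewrite mulrC -mulrA; apply: ler_peMr; first by rewrite exprn_ge0 ?ltW.
by rewrite ler_pdivlMr ?exprn_gt0 // mul1r lerXn2r // nnegrE ltW.
Qed.

Lemma XaddC_exp_perturb_stable (g : {poly C}) : (size g <= n.+1)%N ->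
  exists2 e : R, 0 < e &
    forall z, 0 < Im z -> (('X + w0%:P) ^+ n + (e%:C)%C *: g).[z] != 0.
Proof.
move=> sg; have [M M0 bound] := poly_growth_le sg.
have e0 : 0 < (M + 1)^-1 by rewrite invr_gt0 ltr_wpDl.
exists (M + 1)^-1 => // z hz; set e := (M + 1)^-1.
have eM : e * M < 1 by rewrite mulrC ltr_pdivrMr ?mul1r ?ltrDl ?ltr01 // ltr_wpDl.
rewrite hornerD hornerZ horner_exp hornerD hornerX hornerC.
have := normc_XaddC_ge hz; have := bound z hz; set y := z + w0 => hb hy.
have yn : 0 < normc y ^+ n by rewrite exprn_gt0 // (lt_le_trans w0_gt0).
apply/eqP => h0; have := lerB_normcD (y ^+ n) ((e%:C)%C * g.[z]).
rewrite h0 normc0 normcM normc_real normcX gtr0_norm // subr_le0 => h1.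
have : normc y ^+ n <= e * M * normc y ^+ n.
  by apply: le_trans h1 _; rewrite -mulrA ler_wpM2l // ltW.
by rewrite ler_pMl // leNgt eM.
Qed.

End Perturbation.

Section NecessaryConditions.
Variables (R : realType) (n : nat) (T : {poly R[i]} -> {poly R[i]}).
Hypothesis HT : linear_on_Cn n T.
Local Notation C := R[i].
Local Notation Im := (@complex.Im R).

Lemma XaddC_exp_stable (w : C) : 0 < Im w -> stable1 (('X + w%:P) ^+ n).
Proof.
move=> hw; apply: stable1P => z hz; rewrite horner_exp hornerD hornerX hornerC expf_neq0 //.
by apply: Im_gt0_neq0; rewrite raddfD addr_gt0.
Qed.

Hypothesis Hpres : preserves_stability n T.

Lemma stable2_symbol_of_T_XaddC_exp_neq0 :
  (forall w : C, 0 < Im w -> T (('X + w%:P) ^+ n) != 0) -> stable2 (Text T (zw_pow R n)).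
Proof.
move=> hw.
have Q_neq0 z w : 0 < Im z -> 0 < Im w -> ((Text T (zw_pow R n)).[w%:P]).[z] != 0.
  move=> hz hwi; rewrite (horner_symbol_T HT).
  case: (Hpres (in_Cn_XaddC_exp n w) (XaddC_exp_stable hwi)) => [[_ -> //]|h0].
  by move: (hw w hwi); rewrite h0 eqxx.
split => //; apply/eqP => Q0.
by have := Q_neq0 _ _ (Im_i_gt0 R) (Im_i_gt0 R); rewrite Q0 !horner0 eqxx.
Qed.

(* [T g] is a positive multiple of [T ((X + w0)^n + e g)], the image of a stable polynomial. *)
Lemma image_stable_of_T_XaddC_exp_eq0 (w0 : C) : 0 < Im w0 ->
  T (('X + w0%:P) ^+ n) = 0 -> forall g, in_Cn n g -> stable1 (T g) \/ T g = 0.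
Proof.
move=> hw0 hT0 g hg.
have [e e0 fv] := XaddC_exp_perturb_stable hw0 hg.
have hX := in_Cn_XaddC_exp n w0; have heg := in_CnZ (e%:C)%C hg.
have ec0 : (e%:C)%C != 0 :> C by rewrite fmorph_eq0 gt_eqF.
case: (Hpres (in_CnD hX heg) (stable1P fv)).
all: rewrite (linear_CnD HT hX heg) hT0 add0r (linear_CnZ HT _ hg).
  move=> [nz hv]; left; split; first by apply: contraNneq nz => ->; rewrite scaler0.
  by move=> z hz; have := hv z hz; rewrite hornerZ; apply: contraNneq => ->; rewrite mulr0.
by move/eqP; rewrite scaler_eq0 (negbTE ec0) => /eqP; right.
Qed.

End NecessaryConditions.

(* If [T g0] is stable then, for [c] chosen so that [T f - c T g0] vanishes at ['i],
   the polynomial [T f - c T g0] is an image that is not stable, hence zero. *)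
Lemma rank_one_of_image_stable (R : realType) (n : nat) (T : {poly R[i]} -> {poly R[i]}) :
  linear_on_Cn n T -> (forall g, in_Cn n g -> stable1 (T g) \/ T g = 0) ->
  exists (alpha : {poly R[i]} -> R[i]) (P : {poly R[i]}),
    linear_on_Cn n alpha /\ stable1 P /\ forall f, in_Cn n f -> T f = alpha f *: P.
Proof.
move=> HT hS; have hi := Im_i_gt0 R.
case: (classic (exists g, in_Cn n g /\ T g != 0)) => [[g0 [hg0 nz]]|none].
  case: (hS g0 hg0) => [[_ Pv]|h0]; last by rewrite h0 eqxx in nz.
  pose P := T g0; have Pi := Pv _ hi.
  exists (fun f => (T f).['i%C] / P.['i%C]), P; split; last split => //.
    by move=> a f g hf hg /=; rewrite HT // hornerD hornerZ mulrDl -mulrA.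
  move=> f hf; set c := _ / _.
  have hD : in_Cn n ((- c) *: g0 + f) by apply: in_CnD => //; apply: in_CnZ.
  case: (hS _ hD); rewrite HT //.
    move=> [_ /(_ _ hi)]; rewrite hornerD hornerZ /c -/P mulNr divfK // addrC subrr eqxx //.
  by move/eqP; rewrite addrC scaleNr subr_eq0 => /eqP.
exists (fun _ => 0), 1; split; last split.
- by move=> a f g _ _; rewrite scaler0 addr0.
- by apply: stable1P => z _; rewrite hornerC oner_eq0.
- move=> f hf; rewrite scale0r; apply: NNPP => ne; apply: none.
  by exists f; split => //; apply/eqP.
Qed.

Section Laguerre.
Variable R : rcfType.
Local Notation C := R[i].
Local Notation Re := (@complex.Re R).
Local Notation Im := (@complex.Im R).

Lemma Im_inv_le (s : R) (y : C) : 0 < s -> s <= Im y ->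
  Im y^-1 <= - s * (Re y^-1 ^+ 2 + Im y^-1 ^+ 2).
Proof.
case: y => c d /= hs hd.
have hn : 0 < c ^+ 2 + d ^+ 2 by rewrite ltr_pwDr ?sqr_ge0 // exprn_gt0 // (lt_le_trans hs).
have -> : (c / (c ^+ 2 + d ^+ 2)) ^+ 2 + (- (d / (c ^+ 2 + d ^+ 2))) ^+ 2 =
   (c ^+ 2 + d ^+ 2)^-1 by field; rewrite gt_eqF.
by rewrite mulNr lerN2 ler_pM2r ?invr_gt0.
Qed.

(* One step of Cauchy-Schwarz for the sum of [m + 1] complex numbers. *)
Lemma sqr_norm_addr_le (A B a b S m : R) : 0 <= m -> 0 <= S ->
  A ^+ 2 + B ^+ 2 <= m * S ->
  (a + A) ^+ 2 + (b + B) ^+ 2 <= (m + 1) * ((a ^+ 2 + b ^+ 2) + S).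
Proof.
move=> hm hS h.
have key : 0 <= (A - m * a) ^+ 2 + (B - m * b) ^+ 2 by rewrite addr_ge0 ?sqr_ge0.
have [m0|mpos] := eqVneq m 0; last first.
  have mp : 0 < m by rewrite lt_def mpos hm.
  nra.
move: h; rewrite m0 mul0r => h.
have /eqP : A ^+ 2 + B ^+ 2 = 0 by apply/eqP; rewrite eq_le h addr_ge0 ?sqr_ge0.
rewrite paddr_eq0 ?sqr_ge0 // !sqrf_eq0 => /andP[/eqP -> /eqP ->]; rewrite !addr0; lra.
Qed.

Lemma sum_inv_facts (s : R) (v : C) (rs : seq C) : 0 < s -> s <= Im v ->
  all (fun r => Im r <= 0) rs ->
  let S := \sum_(r <- rs) (v - r)^-1 in
  let S2 := \sum_(r <- rs) (Re (v - r)^-1 ^+ 2 + Im (v - r)^-1 ^+ 2) in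
  [/\ 0 <= S2, Im S <= - s * S2 & Re S ^+ 2 + Im S ^+ 2 <= (size rs)%:R * S2].
Proof.
move=> hs hv; elim: rs => [|r rs IH] /=.
  by rewrite !big_nil /= => _; split; rewrite ?mulr0 ?mul0r ?expr0n /= ?addr0.
move=> /andP [hr hall]; have [h1 h2 h3] := IH hall.
rewrite !big_cons !raddfD; split.
- by rewrite addr_ge0 // addr_ge0 ?sqr_ge0.
- rewrite mulrDr; apply: lerD => //; apply: Im_inv_le => //.
  by apply: le_trans hv _; rewrite raddfB lerDl oppr_ge0.
- by rewrite -natr1; apply: sqr_norm_addr_le.
Qed.

Lemma natr_complex (N : nat) : (N%:R : C) = ((N%:R : R) +i* 0)%C.
Proof.
elim: N => [//|N IH]; rewrite -addn1 !natrD IH.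
by apply/eqP; rewrite eq_complex /= addr0 !eqxx.
Qed.

(* With [S = sum 1/(v - r)], [Im S] is negative and controls [|S|^2] (Cauchy-Schwarz),
   so [N + (u - v) S = 0] would force [Im (u - v) + Im v <= 0]. *)
Lemma laguerre_sum_neq0 (N : nat) (u v : C) (rs : seq C) : (0 < N)%N ->
  0 < Im u -> 0 < Im v -> all (fun r => Im r <= 0) rs -> (size rs <= N)%N ->
  N%:R + (u - v) * \sum_(r <- rs) (v - r)^-1 != 0.
Proof.
move=> N0 hu hv hall hsz.
have [h1 h2 h3] := sum_inv_facts hv (lexx _) hall.
move: h1 h2 h3; set S := \sum_(r <- rs) (v - r)^-1; set S2 := \sum_(r <- rs) (_ + _) => h1 h2 h3.
have hq : Im (u - v) = Im u - Im v by rewrite raddfB.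
rewrite natr_complex; apply/eqP => E.
move: (congr1 Re E) (congr1 Im E); rewrite !raddfD /= ReM ImM /=.
clearbody S S2; move: h2 h3 hq.
set a := Re S; set b := Im S; set p := Re (u - v); set q := Im (u - v); set s := Im v.
move=> h2 h3 hq ER EI.
have h4 : a ^+ 2 + b ^+ 2 <= N%:R * S2 by apply: le_trans h3 _; rewrite ler_wpM2r ?ler_nat.
have h5 : q * (a ^+ 2 + b ^+ 2) = N%:R * b.
  apply/eqP; rewrite -subr_eq0.
  have -> : q * (a ^+ 2 + b ^+ 2) - N%:R * b =
    a * (0 + (p * b + q * a)) - b * (N%:R + (p * a - q * b)) by ring.
  by rewrite ER EI !mulr0 subr0.
have h6 : 0 < a ^+ 2 + b ^+ 2.
  rewrite lt_def addr_ge0 ?sqr_ge0 // andbT paddr_eq0 ?sqr_ge0 // !sqrf_eq0.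
  apply/negP => /andP[/eqP a0 /eqP b0]; move: ER.
  by rewrite a0 b0 !mulr0 !subr0 addr0 => /eqP; rewrite pnatr_eq0 => /eqP N00; rewrite N00 in N0.
have Nr : (1 : R) <= N%:R by rewrite ler1n.
have h7 : (q + s) * (a ^+ 2 + b ^+ 2) <= 0 by nra.
by move: h7; rewrite leNgt mulr_gt0 //; lra.
Qed.

Lemma horner_deriv_prod_XsubC (rs : seq C) (v : C) : all (fun r => v - r != 0) rs ->
  (\prod_(r <- rs) ('X - r%:P))^`().[v] =
  (\prod_(r <- rs) ('X - r%:P)).[v] * \sum_(r <- rs) (v - r)^-1.
Proof.
elim: rs => [|r rs IH] /=; first by rewrite !big_nil derivC horner0 mulr0.
move=> /andP [hr hall]; rewrite !big_cons derivM derivXsubC mul1r hornerD !hornerM IH //.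
by rewrite hornerXsubC; field.
Qed.

Definition polar_deriv (N : nat) (u : C) (g : {poly C}) : {poly C} :=
  N%:R *: g + (u%:P - 'X) * g^`().

Lemma polar_deriv_neq0 (N : nat) (g : {poly C}) (u v : C) : (0 < N)%N ->
  (size g <= N.+1)%N -> g != 0 -> (forall w, 0 < Im w -> g.[w] != 0) ->
  0 < Im u -> 0 < Im v -> (polar_deriv N u g).[v] != 0.
Proof.
move=> N0 hsz g0 hg hu hv.
have [rs Hg] := closed_field_poly_normal g.
set lc := lead_coef g in Hg; set p := \prod_(r <- rs) _ in Hg.
have lc0 : lc != 0 by rewrite lead_coef_eq0.
have hsz' : (size rs <= N)%N by move: hsz; rewrite Hg size_scale // size_prod_XsubC.
have hroots := roots_Im_le0 Hg hg.
have hpv : p.[v] != 0.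
  by have := hg v hv; rewrite Hg hornerZ; apply: contraNneq => ->; rewrite mulr0.
have hall : all (fun r => v - r != 0) rs.
  apply/allP => r hr; apply: Im_gt0_neq0; rewrite raddfB.
  by have := allP hroots r hr => /= h; lra.
rewrite /polar_deriv Hg derivZ hornerD hornerZ hornerM hornerZ hornerD hornerN hornerX hornerC.
rewrite hornerZ /p horner_deriv_prod_XsubC // -/p.
have -> : N%:R * (lc * p.[v]) + (u - v) * (lc * (p.[v] * \sum_(r <- rs) (v - r)^-1)) =
  lc * p.[v] * (N%:R + (u - v) * \sum_(r <- rs) (v - r)^-1) by ring.
by rewrite !mulf_neq0 // laguerre_sum_neq0.
Qed.

Lemma coef_polar_deriv N (u : C) (g : {poly C}) k :
  (polar_deriv N u g)`_k = N%:R * g`_k + u * (g`_k.+1 *+ k.+1) - g`_k *+ k.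
Proof.
rewrite /polar_deriv coefD coefZ mulrBl coefB coefCM coef_deriv coefXM addrA.
by congr (_ - _); case: k => [|k] /=; rewrite ?mulr0n // coef_deriv.
Qed.

Lemma size_polar_deriv N (u : C) (g : {poly C}) :
  (size g <= N.+1)%N -> (size (polar_deriv N u g) <= N)%N.
Proof.
move=> hg; apply/leq_sizeP => j hj; rewrite coef_polar_deriv.
have -> : g`_j.+1 = 0 by move/leq_sizeP: hg; apply; rewrite ltnS.
rewrite mul0rn mulr0 addr0; case: (ltnP N j) => hNj.
  have -> : g`_j = 0 by move/leq_sizeP: hg; apply.
  by rewrite mulr0 mul0rn subrr.
have -> : j = N by apply/eqP; rewrite eqn_leq hNj hj.
by rewrite mulr_natl subrr.
Qed.

Lemma apolar_polar_deriv_term n k (a g0 g1 u : C) : (k <= n)%N ->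
  n.+1%:R * (a * g0 / ('C(n.+1, k))%:R + u * a * g1 / ('C(n.+1, k.+1))%:R) =
  a * (n.+1%:R * g0 + u * (g1 *+ k.+1) - g0 *+ k) / ('C(n, k))%:R.
Proof.
move=> hk.
have D0 : ('C(n, k))%:R != 0 :> C := bin_natr_neq0 _ hk.
have A0 : ('C(n.+1, k))%:R != 0 :> C by rewrite bin_natr_neq0 ?leqW.
have B0 : ('C(n.+1, k.+1))%:R != 0 :> C by rewrite bin_natr_neq0.
have ND0 : (n.+1%:R * ('C(n, k))%:R : C) != 0 by rewrite mulf_neq0 // pnatr_eq0.
have cb1 : ('C(n.+1, k))%:R * (n.+1%:R - k%:R) = n.+1%:R * ('C(n, k))%:R :> C.
  by rewrite -natrB ?leqW // -!natrM mulnC -mul_bin_down.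
have cb2 : ('C(n.+1, k.+1))%:R * k.+1%:R = n.+1%:R * ('C(n, k))%:R :> C.
  by rewrite -!natrM mulnC -mul_bin_diag.
have iA : (('C(n.+1, k))%:R : C)^-1 = (n.+1%:R - k%:R) / (n.+1%:R * ('C(n, k))%:R).
  by apply: (mulfI A0); rewrite mulfV // mulrA cb1 mulfV.
have iB : (('C(n.+1, k.+1))%:R : C)^-1 = k.+1%:R / (n.+1%:R * ('C(n, k))%:R).
  by apply: (mulfI B0); rewrite mulfV // mulrA cb2 mulfV.
rewrite iA iB -[g1 *+ _]mulr_natr -[g0 *+ _]mulr_natr; field.
by rewrite D0 addrC natr1 pnatr_eq0.
Qed.

Lemma apolar_polar_deriv n (u : C) (f g : {poly C}) : (size f <= n.+1)%N ->
  n.+1%:R * apolar n.+1 (('X + u%:P) * f) g = apolar n f (polar_deriv n.+1 u g).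
Proof.
move=> hf; have fcoef j : (('X + u%:P) * f)`_j = (if j is j'.+1 then f`_j' else 0) + u * f`_j.
  by rewrite mulrDl coefD coefXM coefCM; case: j.
rewrite /apolar.
transitivity (n.+1%:R * \sum_(k < n.+1) (f`_(n - k) * g`_k / ('C(n.+1, k))%:R +
    u * f`_(n - k) * g`_k.+1 / ('C(n.+1, k.+1))%:R)).
  congr (_ * _); rewrite big_split /=.
  under eq_bigr do rewrite fcoef mulrDl mulrDl.
  rewrite big_split /=; congr (_ + _).
    rewrite big_ord_recr /= subnn /= !mul0r addr0.
    by apply: eq_bigr => k _; rewrite subSn // -ltnS.
  rewrite big_ord_recl /= subn0.
  have -> : f`_n.+1 = 0 by move/leq_sizeP: hf; apply.
  rewrite mulr0 !mul0r add0r; apply: eq_bigr => k _.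
  by rewrite /bump /= subSS add1n.
rewrite mulr_sumr; apply: eq_bigr => k _.
by rewrite coef_polar_deriv apolar_polar_deriv_term // -ltnS.
Qed.

(* Grace's theorem in the form needed: peel off one linear factor at a time,
   replacing [g] by its polar derivative with respect to the mirrored root. *)
Lemma grace_apolar_neq0 (bs : seq C) (g : {poly C}) : all (fun b => Im b < 0) bs ->
  (size g <= (size bs).+1)%N -> g != 0 -> (forall w, 0 < Im w -> g.[w] != 0) ->
  apolar (size bs) (\prod_(b <- bs) ('X - b%:P)) g != 0.
Proof.
elim: bs g => [|b bs IH] g /=.
  move=> _ hg g0 _; rewrite /apolar big_ord1 big_nil /= coef1 mul1r bin0 divr1.
  by move: g0; rewrite (size1_polyC hg) polyC_eq0 coefC eqxx.
move=> /andP [hb hall] hg g0 gv.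
have hu : 0 < Im (- b) by rewrite raddfN oppr_gt0.
have hv := polar_deriv_neq0 (ltn0Sn _) hg g0 gv hu.
have h0 : polar_deriv (size bs).+1 (- b) g != 0.
  by apply: contraTneq (hv _ (Im_i_gt0 R)) => ->; rewrite horner0 eqxx.
have := IH _ hall (size_polar_deriv _ hg) h0 hv.
rewrite -apolar_polar_deriv ?size_prod_XsubC // big_cons polyCN.
by apply: contraNneq => ->; rewrite mulr0.
Qed.

End Laguerre.

Section Hurwitz.
Variable R : rcfType.
Local Notation C := R[i].
Local Notation Im := (@complex.Im R).

Lemma normc_prod_shift_le (rs : seq C) (z0 t : C) : all (fun r => Im r <= 0) rs ->
  normc t <= Im z0 ->
  normc (\prod_(r <- rs) (z0 + t - r)) <= 2 ^+ size rs * normc (\prod_(r <- rs) (z0 - r)).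
Proof.
move=> hall ht; elim: rs hall => [|r rs IH] /=; first by rewrite !big_nil expr0 mul1r.
move=> /andP [hr hall]; rewrite !big_cons !normcM exprS mulrACA.
apply: ler_pM; rewrite ?mulr_ge0 ?normc_ge0 ?exprn_ge0 ?IH //.
have htr : normc t <= normc (z0 - r).
  apply: le_trans ht (le_trans _ (Im_le_normc _)); rewrite raddfB /=; lra.
rewrite addrAC; apply: le_trans (le_normcD _ _) _; lra.
Qed.

(* All roots lie in the closed lower half-plane, so moving the argument by at most
   [Im z0] at most doubles the distance to each root. *)
Lemma normc_horner_shift_le (p : {poly C}) (z0 t : C) : p != 0 ->
  (forall w, 0 < Im w -> p.[w] != 0) -> normc t <= Im z0 ->
  normc p.[z0 + t] <= 2 ^+ size p * normc p.[z0].
Proof.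
move=> p0 pv ht; have [rs Hp] := closed_field_poly_normal p.
set lc := lead_coef p in Hp.
have ev x : p.[x] = lc * \prod_(r <- rs) (x - r).
  rewrite Hp hornerZ horner_prod; congr (_ * _).
  by apply: eq_bigr => r _; rewrite hornerXsubC.
have hs : (size rs < size p)%N by rewrite Hp size_scale ?lead_coef_eq0 // size_prod_XsubC.
rewrite !ev !normcM mulrCA ler_wpM2l ?normc_ge0 //.
apply: le_trans (normc_prod_shift_le (roots_Im_le0 Hp pv) ht) _.
by rewrite ler_wpM2r ?normc_ge0 // ler_eXn2l ?ltr1n // ltnW.
Qed.

Lemma pencil_neq0_near0 (a b : {poly C}) : a != 0 ->
  exists2 eta : R, 0 < eta & forall e, 0 < e -> e < eta -> a + (e%:C)%C *: b != 0.
Proof.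
move=> a0.
case: (classic (exists2 e0 : R, 0 < e0 & a + (e0%:C)%C *: b = 0)) => [[e0 he0 E0]|none].
  exists e0 => // e he hlt; apply/eqP => E.
  have : ((e%:C)%C - (e0%:C)%C) *: b = 0.
    have <- : (a + (e%:C)%C *: b) - (a + (e0%:C)%C *: b) = ((e%:C)%C - (e0%:C)%C) *: b.
      by rewrite scalerBl opprD addrACA subrr add0r.
    by rewrite E E0 subrr.
  move/eqP; rewrite scaler_eq0 subr_eq0 => /orP [/eqP /complexI ee|/eqP b0].
    by move: hlt; rewrite ee ltxx.
  by move: E0 a0; rewrite b0 scaler0 addr0 => ->; rewrite eqxx.
exists 1 => // e he _; apply/eqP => E; apply: none; exists e => //.
Qed.

(* If [a (z0) = 0], then [a + e b] (stable, with [(a + e b) (z0) = e b (z0)]) is small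
   on the whole segment [z0 + t], [0 <= t <= Im z0], and so is [a]. *)
Lemma pencil_vanish_segment (a b : {poly C}) (eta : R) (z0 : C) : 0 < eta ->
  (forall e, 0 < e -> e < eta ->
     a + (e%:C)%C *: b != 0 /\ forall z, 0 < Im z -> (a + (e%:C)%C *: b).[z] != 0) ->
  a.[z0] = 0 -> forall t : R, 0 <= t -> t <= Im z0 -> a.[z0 + (t%:C)%C] = 0.
Proof.
move=> eta0 Hst az0 t t0 tle; set A := normc a.[z0 + (t%:C)%C].
case: (eqVneq A 0) => [/eq0_normc //|A0].
have Apos : 0 < A by rewrite lt_def A0 normc_ge0.
pose N := (size a + size b)%N.
pose K := normc b.[z0 + (t%:C)%C] + 2 ^+ N * normc b.[z0].
have K0 : 0 <= K by rewrite addr_ge0 ?normc_ge0 // mulr_ge0 ?exprn_ge0 ?normc_ge0.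
pose e := Num.min (eta / 2) (A / (2 * (K + 1))).
have he0 : 0 < e by rewrite lt_min !divr_gt0 // mulr_gt0 // ltr_wpDl.
have heta : e < eta.
  have h : e <= eta / 2 by rewrite ge_min lexx.
  by apply: le_lt_trans h _; rewrite ltr_pdivrMr // ltr_pMr // ltr1n.
have hK : e * K < A.
  have : e * (2 * (K + 1)) <= A by rewrite -ler_pdivlMr ?mulr_gt0 ?ltr_wpDl // ge_min lexx orbT.
  nra.
set p := a + (e%:C)%C *: b; have [p0 pv] := Hst e he0 heta.
have ht : normc (t%:C)%C <= Im z0 by rewrite normc_real ger0_norm.
have hb := normc_horner_shift_le p0 pv ht.
have hsz : (size p <= N)%N.
  apply: leq_trans (size_polyD _ _) _; rewrite geq_max leq_addr /=.
  by apply: leq_trans (size_scale_leq _ _) _; rewrite leq_addl.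
have pz0 : p.[z0] = (e%:C)%C * b.[z0] by rewrite /p hornerD hornerZ az0 add0r.
have hA : A <= normc p.[z0 + (t%:C)%C] + e * normc b.[z0 + (t%:C)%C].
  rewrite /A; have -> : a.[z0 + (t%:C)%C] = p.[z0 + (t%:C)%C] - (e%:C)%C * b.[z0 + (t%:C)%C].
    by rewrite /p hornerD hornerZ addrK.
  apply: le_trans (le_normcD _ _) _.
  by rewrite normcN normcM normc_real (ger0_norm (ltW he0)).
move: hb; rewrite pz0 normcM normc_real (ger0_norm (ltW he0)) => hb.
have : A <= e * K.
  rewrite /K mulrDr; apply: le_trans hA _; rewrite addrC lerD2l mulrCA.
  apply: le_trans hb _; rewrite ler_wpM2r ?mulr_ge0 ?normc_ge0 ?(ltW he0) //.
  by rewrite ler_eXn2l ?ltr1n.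
by rewrite leNgt hK.
Qed.

Lemma hurwitz_pencil (a b : {poly C}) :
  (forall e : R, 0 < e -> a + (e%:C)%C *: b = 0 \/
     forall z, 0 < Im z -> (a + (e%:C)%C *: b).[z] != 0) ->
  a = 0 \/ forall z, 0 < Im z -> a.[z] != 0.
Proof.
move=> H; case: (eqVneq a 0) => [->|a0]; [by left | right].
move=> z0 hz0; apply/negP => /eqP az0.
have [eta eta0 Heta] := pencil_neq0_near0 b a0.
have Hst e : 0 < e -> e < eta ->
    a + (e%:C)%C *: b != 0 /\ forall z, 0 < Im z -> (a + (e%:C)%C *: b).[z] != 0.
  move=> he hlt; split; first exact: Heta.
  by case: (H e he) => // E; move: (Heta e he hlt); rewrite E eqxx.
pose rs := mkseq (fun k => z0 + ((Im z0 / (k.+1)%:R)%:C)%C) (size a).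
have hroot : all (root a) rs.
  apply/allP => x /mapP [k _ ->]; apply/eqP; apply: (pencil_vanish_segment eta0 Hst az0).
    by rewrite divr_ge0 // ltW.
  by rewrite ler_pdivrMr ?ltr0Sn //; apply: ler_peMr; [exact: ltW | rewrite ler1n].
have hu : uniq rs.
  apply: mkseq_uniq => i j /addrI /complexI.
  have hz : Im z0 != 0 by rewrite gt_eqF.
  by move/(mulfI hz)/invr_inj/eqP; rewrite eqr_nat eqSS => /eqP.
by have := max_poly_roots a0 hroot hu; rewrite size_mkseq ltnn.
Qed.

End Hurwitz.

Section Sufficiency.
Variables (R : realType) (n : nat) (T : {poly R[i]} -> {poly R[i]}).
Hypothesis HT : linear_on_Cn n T.
Hypothesis Hs : stable2 (Text T (zw_pow R n)).
Local Notation C := R[i].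
Local Notation Im := (@complex.Im R).
Local Notation pp bs := (\prod_(b <- bs) ('X - b%:P)).
Local Notation stable_or0 p := (p%R = 0 \/ forall z, 0 < Im z -> p.[z] != 0).

Lemma symbol_at_stable z : 0 < Im z ->
  symbol_at n T z != 0 /\ forall w, 0 < Im w -> (symbol_at n T z).[w] != 0.
Proof.
move=> hz; have hw w : 0 < Im w -> (symbol_at n T z).[w] != 0.
  by move=> hwi; rewrite (horner_symbol_at HT); case: Hs => _; apply.
split; last exact: hw.
by apply: contraTneq (hw _ (Im_i_gt0 R)) => ->; rewrite horner0 eqxx.
Qed.

Lemma T_prod_XsubC_full_neq0 bs : all (fun b => Im b < 0) bs -> size bs = n ->
  forall z, 0 < Im z -> (T (pp bs)).[z] != 0.
Proof.
move=> hall hsz z hz; have [h0 hv] := symbol_at_stable hz.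
rewrite (horner_T_apolar HT); last by apply: in_Cn_prod_XsubC; rewrite hsz.
have := @grace_apolar_neq0 _ bs (symbol_at n T z) hall; rewrite hsz; apply => //.
exact: size_poly.
Qed.

(* A real root [r] is the limit of the roots [r - e i] of the lower half-plane. *)
Lemma T_prod_XsubC_real_root bs r : r \in bs -> Im r = 0 -> (size bs <= n)%N ->
  (forall e : R, 0 < e -> stable_or0 (T (pp (r - (e%:C)%C * 'i%C :: rem r bs)))) ->
  stable_or0 (T (pp bs)).
Proof.
move=> hr r0 hsz IH; set q := pp (rem r bs).
have Hpp : pp bs = ('X - r%:P) * q by rewrite (perm_big _ (perm_to_rem hr)) big_cons.
have hq : in_Cn n q.
  by apply: in_Cn_prod_XsubC; rewrite size_rem // (leq_trans (leq_pred _) hsz).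
have hpp : in_Cn n (pp bs) by apply: in_Cn_prod_XsubC.
apply: (hurwitz_pencil (b := T ('i%C *: q))) => e he.
rewrite -(linear_CnZ HT _ (in_CnZ _ hq)) -(linear_CnD HT hpp (in_CnZ _ (in_CnZ _ hq))).
suff -> : pp bs + (e%:C)%C *: ('i%C *: q) = pp (r - (e%:C)%C * 'i%C :: rem r bs) by apply: IH.
by rewrite big_cons Hpp scalerA -mul_polyC polyCB opprB -mulrDl addrAC -addrA.
Qed.

(* A missing root is the limit of the roots [- i / e] escaping to infinity. *)
Lemma T_prod_XsubC_low_degree bs : (size bs < n)%N ->
  (forall e : R, 0 < e -> stable_or0 (T (pp ((0 +i* (- e^-1))%C :: bs)))) ->
  stable_or0 (T (pp bs)).
Proof.
move=> hsz IH; have hpp : in_Cn n (pp bs) by apply: in_Cn_prod_XsubC; rewrite ltnW.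
have hXpp : in_Cn n ('X * pp bs).
  apply: leq_trans (size_polyMleq _ _) _.
  by rewrite size_prod_XsubC size_polyX addnS; lia.
apply: (hurwitz_pencil (b := T (- 'i%C *: ('X * pp bs)))) => e he.
have e0 : e != 0 by rewrite gt_eqF.
have c0 : - ((e%:C)%C * 'i%C) != 0 :> C.
  by rewrite oppr_eq0 mulf_neq0 ?fmorph_eq0 ?Im_gt0_neq0 ?Im_i_gt0.
have ei : (e%:C)%C * 'i%C * (0 +i* (- e^-1))%C = 1 :> C.
  by apply/eqP; rewrite eq_complex /=; apply/andP; split; apply/eqP; field.
have hXpp' : in_Cn n (pp ((0 +i* (- e^-1))%C :: bs)) by apply: in_Cn_prod_XsubC.
have -> : T (pp bs) + (e%:C)%C *: T (- 'i%C *: ('X * pp bs)) =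
    (- ((e%:C)%C * 'i%C)) *: T (pp ((0 +i* (- e^-1))%C :: bs)).
  rewrite -(linear_CnZ HT _ hXpp') -(linear_CnZ HT _ (in_CnZ _ hXpp)).
  rewrite -(linear_CnD HT hpp (in_CnZ _ (in_CnZ _ hXpp))); congr T.
  rewrite big_cons mulrBl scalerBr mul_polyC !scalerA mulNr ei scaleN1r opprK.
  by rewrite mulrN addrC.
case: (IH e he) => [->|hv]; first by left; rewrite scaler0.
by right => z hz; rewrite hornerZ mulf_neq0 ?hv.
Qed.

Lemma T_prod_XsubC_stable (k : nat) bs : (size bs <= n)%N -> all (fun b => Im b <= 0) bs ->
  ((n - size bs) + count (fun b => Im b == 0%R) bs)%N = k -> stable_or0 (T (pp bs)).
Proof.
elim: k bs => [|k IH] bs hsz hall hk.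
  move/eqP: hk; rewrite addn_eq0 subn_eq0 => /andP [h1 /eqP h2].
  right; apply: T_prod_XsubC_full_neq0; last by apply/eqP; rewrite eqn_leq hsz.
  apply/allP => b hb; rewrite lt_neqAle (allP hall b hb) andbT.
  apply/negP => hb0; have : has (fun b => Im b == 0) bs by apply/hasP; exists b.
  by rewrite has_count h2.
have [/hasP [r hr /eqP r0]|hc] := boolP (has (fun b => Im b == 0) bs).
  apply: (T_prod_XsubC_real_root hr r0 hsz) => e he.
  have hIm : Im (r - (e%:C)%C * 'i%C) = - e.
    by rewrite raddfB /= r0 mulr1 mul0r addr0 sub0r.
  have hsb : (0 < size bs)%N by case: (bs) hr.
  apply: IH => /=.
  - by rewrite size_rem // prednK.
  - rewrite hIm oppr_le0 ltW //=; apply/allP => b /mem_rem; exact: (allP hall).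
  - rewrite hIm oppr_eq0 gt_eqF //= add0n count_rem hr r0 eqxx size_rem // prednK //=.
    have : (0 < count (fun b => Im b == 0%R) bs)%N.
      by rewrite -has_count; apply/hasP; exists r; rewrite ?r0.
    lia.
have hc0 : count (fun b => Im b == 0%R) bs = 0%N by apply/eqP; rewrite -leqn0 leqNgt -has_count.
apply: T_prod_XsubC_low_degree; first by rewrite -subn_gt0; move: hk; rewrite hc0 addn0 => ->.
move=> e he; apply: IH => /=.
- by move: hk; rewrite hc0; lia.
- by rewrite oppr_le0 invr_ge0 ltW.
- by rewrite oppr_eq0 invr_eq0 gt_eqF //= hc0; lia.
Qed.

Lemma preserves_stability_of_stable2_symbol : preserves_stability n T.
Proof.
move=> f hf [f0 fv]; have [rs Hf] := closed_field_poly_normal f.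
have lc0 : lead_coef f != 0 by rewrite lead_coef_eq0.
have hsz : (size rs <= n)%N by move: hf; rewrite /in_Cn Hf size_scale // size_prod_XsubC.
rewrite Hf (linear_CnZ HT _ (in_Cn_prod_XsubC hsz)).
case: (T_prod_XsubC_stable hsz (roots_Im_le0 Hf fv) erefl) => [->|hv].
  by right; rewrite scaler0.
by left; apply: stable1Z.
Qed.

End Sufficiency.

Theorem mainTheorem3 (R : realType) (n : nat)
    (T : {poly R[i]} -> {poly R[i]}) (HT : linear_on_Cn n T) :
  preserves_stability n T <->
  ((exists (alpha : {poly R[i]} -> R[i]) (P : {poly R[i]}),
       linear_on_Cn n alpha /\ stable1 P /\
       forall f : {poly R[i]}, in_Cn n f -> T f = alpha f *: P)
   \/ stable2 (Text T (zw_pow R n))).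
Proof.
split=> [Hpres|[[alpha [P [_ [[_ Pv] hT]]]]|Hs]]; last exact: preserves_stability_of_stable2_symbol.
  case: (classic (exists2 w0 : R[i], 0 < complex.Im w0 & T (('X + w0%:P) ^+ n) = 0)).
    move=> [w0 hw0 hT0]; left; apply: (rank_one_of_image_stable HT).
    exact: image_stable_of_T_XaddC_exp_eq0 hw0 hT0.
  move=> none; right; apply: stable2_symbol_of_T_XaddC_exp_neq0 => // w hw.
  by apply/eqP => h0; apply: none; exists w.
move=> f hf _; rewrite hT //.
have [->|a0] := eqVneq (alpha f) 0; first by right; rewrite scale0r.
by left; apply: stable1Z.
Qed.
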